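(* Let $L_{\mathbb{Z}_p}$ be a lattice with integral quadratic form $Q_L$ and consider $\Lambda_0=L_{\mathbb{Z}_p}\perp H^2=L_{\mathbb{Z}_p}\oplus\mathbb{Z}_p^4$ with $Q(x_L,x_0,x_1,x_2,x_3)=Q_L(x_L)+x_0x_1+x_2x_3$. Let $w\in\Lambda_0$ with $Q(w)\neq0$. Then the orthogonal complement $\langle w\rangle^\perp=\{x\in\Lambda_0:\langle w,x\rangle=0\}$ (with the restricted form) is isometric to $H\perp\Lambda$ for some lattice $\Lambda$.
   Context: $\langle v,w\rangle=Q(v+w)-Q(v)-Q(w)$ is the bilinear form of $Q$; $Q_L$ integral means $Q_L(L_{\mathbb{Z}_p})\subseteq\mathbb{Z}_p$. $H$ denotes the hyperbolic plane $\mathbb{Z}_p^2$ with $Q(x,y)=xy$ and $H^2=H\perp H$. *)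

From HB Require Import structures.
From mathcomp Require Import all_boot all_order all_algebra.
From Stdlib Require Import ClassicalEpsilon FunctionalExtensionality ProofIrrelevance.
Set Implicit Arguments. Unset Strict Implicit. Unset Printing Implicit Defensive.
Import GRing.Theory.
Local Open Scope ring_scope.

(* The ring Z_p of p-adic integers, built as the inverse limit         *)
(*   padint p = lim_n Z/p^(n+1)Z                                       *)
(* of coherent sequences (x_n)_n with x_n in 'Z_(p^(n+1)) and          *)
(* x_{n+1} = x_n mod p^(n+1).  For p <= 1 the base is replaced by 2    *)
(* (as for 'Z_p), so the construction is only meaningful for prime p,  *)
(* which the main theorem assumes.                                     *)
Definition padq (p : nat) : nat := maxn p 2.
Definition padM (p n : nat) : nat := (padq p ^ n.+1)%N.
Lemma padM_gt1 p n : (1 < padM p n)%N.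
Proof.
rewrite /padM /padq; have h : (1 < maxn p 2)%N by rewrite leq_max orbT.
by rewrite (leq_trans h) // -{1}(expn1 (maxn p 2)) leq_pexp2l // ltnW.
Qed.
Definition padL (p n : nat) := 'Z_(padM p n).
Definition padred (p n : nat) (a : padL p n.+1) : padL p n := (val a)%:R.

Lemma padredK p n k : padred (k%:R : padL p n.+1) = k%:R.
Proof.
apply: val_inj => /=; rewrite /padred.
rewrite !val_Zp_nat ?padM_gt1 //.
have -> : val (k%:R : padL p n.+1) = (k %% padM p n.+1)%N by exact: val_Zp_nat (padM_gt1 p n.+1) k.
have hd : (padM p n %| padM p n.+1)%N by rewrite /padM dvdn_exp2l.
exact: (modn_dvdm k hd).
Qed.
Lemma padredD p n a b : padred (a + b : padL p n.+1) = padred a + padred b.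
Proof. by rewrite -(natr_Zp a) -(natr_Zp b) -natrD !padredK natrD. Qed.
Lemma padredM p n a b : padred (a * b : padL p n.+1) = padred a * padred b.
Proof. by rewrite -(natr_Zp a) -(natr_Zp b) -natrM !padredK natrM. Qed.
Lemma padred1 p n : padred (1 : padL p n.+1) = 1.
Proof. by rewrite -(natr_Zp 1) padredK. Qed.
Lemma padred0 p n : padred (0 : padL p n.+1) = 0.
Proof. by rewrite -(natr_Zp 0) padredK. Qed.
Lemma padredN p n a : padred (- a : padL p n.+1) = - padred a.
Proof. by apply/eqP; rewrite -subr_eq0 opprK -padredD addNr padred0. Qed.

Record padint (p : nat) := MkZp {
  zseq : forall n, padL p n;
  zcoh : forall n, padred (zseq n.+1) = zseq n }.

Lemma Zp_ext p (x y : padint p) : (forall n, zseq x n = zseq y n) -> x = y.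
Proof.
case: x y => [x hx] [y hy] /= e.
have exy : x = y by apply: functional_extensionality_dep.
subst y; congr MkZp; apply: proof_irrelevance.
Qed.


Definition Zp_eqb (p : nat) (x y : padint p) : bool :=
  if excluded_middle_informative (x = y) then true else false.
Lemma Zp_eqP (p : nat) : Equality.axiom (@Zp_eqb p).
Proof.
move=> x y; rewrite /Zp_eqb; case: excluded_middle_informative => h.
  by constructor. by constructor.
Qed.
HB.instance Definition _ (p : nat) := hasDecEq.Build (padint p) (@Zp_eqP p).

Definition Zp_find (p : nat) (P : pred (padint p)) (n : nat) : option (padint p) :=
  match excluded_middle_informative (exists x, P x) with
  | left H => Some (proj1_sig (constructive_indefinite_description _ H))
  | right _ => None
  end.
Lemma Zp_find_some (p : nat) (P : pred (padint p)) n x : Zp_find P n = Some x -> P x.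
Proof.
rewrite /Zp_find; case: excluded_middle_informative => // H [<-].
exact: proj2_sig (constructive_indefinite_description _ H).
Qed.
Lemma Zp_find_ex (p : nat) (P : pred (padint p)) : (exists x, P x) -> exists n, Zp_find P n.
Proof.
move=> H; exists 0%N; rewrite /Zp_find.
by case: excluded_middle_informative.
Qed.
Lemma Zp_find_ext (p : nat) (P Q : pred (padint p)) : P =1 Q -> Zp_find P =1 Zp_find Q.
Proof.
by move=> e; have -> : P = Q by apply: functional_extensionality.
Qed.
HB.instance Definition _ (p : nat) := hasChoice.Build (padint p) (@Zp_find_some p) (@Zp_find_ex p) (@Zp_find_ext p).

Definition Zp_zero (p : nat) : padint p := MkZp (fun n => padred0 p n).
Definition Zp_one (p : nat) : padint p := MkZp (fun n => padred1 p n).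
Definition Zp_add (p : nat) (x y : padint p) : padint p :=
  MkZp (fun n => etrans (padredD _ _) (f_equal2 +%R (zcoh x n) (zcoh y n))).
Definition Zp_mul (p : nat) (x y : padint p) : padint p :=
  MkZp (fun n => etrans (padredM _ _) (f_equal2 *%R (zcoh x n) (zcoh y n))).
Definition Zp_opp (p : nat) (x : padint p) : padint p :=
  MkZp (fun n => etrans (padredN _) (f_equal -%R (zcoh x n))).

Lemma Zp_addA (p : nat) : associative (@Zp_add p).
Proof. by move=> x y z; apply: Zp_ext => n /=; rewrite addrA. Qed.
Lemma Zp_addC (p : nat) : commutative (@Zp_add p).
Proof. by move=> x y; apply: Zp_ext => n /=; rewrite addrC. Qed.
Lemma Zp_add0 (p : nat) : left_id (Zp_zero p) (@Zp_add p).
Proof. by move=> x; apply: Zp_ext => n /=; rewrite add0r. Qed.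
Lemma Zp_addN (p : nat) : left_inverse (Zp_zero p) (@Zp_opp p) (@Zp_add p).
Proof. by move=> x; apply: Zp_ext => n /=; rewrite addNr. Qed.
HB.instance Definition _ (p : nat) := GRing.isZmodule.Build (padint p) (@Zp_addA p) (@Zp_addC p) (@Zp_add0 p) (@Zp_addN p).

Lemma Zp_mulA (p : nat) : associative (@Zp_mul p).
Proof. by move=> x y z; apply: Zp_ext => n /=; rewrite mulrA. Qed.
Lemma Zp_mulC (p : nat) : commutative (@Zp_mul p).
Proof. by move=> x y; apply: Zp_ext => n /=; rewrite mulrC. Qed.
Lemma Zp_mul1 (p : nat) : left_id (Zp_one p) (@Zp_mul p).
Proof. by move=> x; apply: Zp_ext => n /=; rewrite mul1r. Qed.
Lemma Zp_mulDl (p : nat) : left_distributive (@Zp_mul p) (@Zp_add p).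
Proof. by move=> x y z; apply: Zp_ext => n /=; rewrite mulrDl. Qed.
Lemma Zp_one_neq0 (p : nat) : Zp_one p != Zp_zero p.
Proof.
apply/eqP => /(f_equal (fun x => zseq x 0%N)) /= /eqP.
by rewrite oner_eq0.
Qed.
HB.instance Definition _ (p : nat) := GRing.Zmodule_isComNzRing.Build (padint p)
  (@Zp_mulA p) (@Zp_mulC p) (@Zp_mul1 p) (@Zp_mulDl p) (@Zp_one_neq0 p).


Definition polar (R : comNzRingType) (V : lmodType R) (Q : V -> R) (x y : V) : R :=
  Q (x + y) - Q x - Q y.

(* Q is a quadratic form: Q(a x) = a^2 Q(x) and its polar form is bilinear
   (linearity in the first argument; the polar form is symmetric by definition). *)
Definition quad_form (R : comNzRingType) (V : lmodType R) (Q : V -> R) : Prop :=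
  (forall (a : R) (x : V), Q (a *: x) = a ^+ 2 * Q x) /\
  (forall (a : R) (x y z : V), polar Q (a *: x + y) z = a * polar Q x z + polar Q y z).

Definition o4_0 : 'I_4 := @Ordinal 4 0 isT.
Definition o4_1 : 'I_4 := @Ordinal 4 1 isT.
Definition o4_2 : 'I_4 := @Ordinal 4 2 isT.
Definition o4_3 : 'I_4 := @Ordinal 4 3 isT.
Definition o2_0 : 'I_2 := @Ordinal 2 0 isT.
Definition o2_1 : 'I_2 := @Ordinal 2 1 isT.

Definition QLH2 (R : comNzRingType) (n : nat) (QL : 'rV[R]_n -> R)
    (v : 'rV[R]_n * 'rV[R]_4) : R :=
  QL v.1 + v.2 0 o4_0 * v.2 0 o4_1 + v.2 0 o4_2 * v.2 0 o4_3.

Definition QHL (R : comNzRingType) (m : nat) (QLam : 'rV[R]_m -> R)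
    (y : 'rV[R]_2 * 'rV[R]_m) : R :=
  y.1 0 o2_0 * y.1 0 o2_1 + QLam y.2.

From HB Require Import structures.
From mathcomp Require Import all_boot all_order all_algebra ring.
From Stdlib Require Import Classical ClassicalEpsilon.
Set Implicit Arguments. Unset Strict Implicit. Unset Printing Implicit Defensive.
Import GRing.Theory.
Local Open Scope ring_scope.

(* Let Lambda_0 = L ⊥ H^2 over Z_p and w in Lambda_0 with Q(w) != 0.  The
   orthogonal complement of w is the kernel of the linear functional
   f = <w, .>, and the argument only uses that Z_p is a valuation domain
   in which 2 != 0:
   - f(w) = 2 Q(w) != 0, so f is nonzero; dividing by a value of f on the
     standard basis of least valuation writes f = c g with c != 0 and g
     primitive (g = 1 on some basis vector), and ker f = ker g;
   - if g(e_0) = 1 for the first hyperbolic basis vector, solving g x = 0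
     for x_0 exhibits ker g explicitly as H ⊥ (L ⊕ Z_p) (KernelWithPivot);
   - in general some isometry of Lambda_0 (a coordinate swap inside H^2 or
     an Eichler transformation) moves e_0 to a vector on which g is a unit,
     and the splitting transports along it (using that Z_p is local). *)

Definition is_unit (R : comNzRingType) (x : R) : Prop := exists y, x * y = 1.

Definition lin_functional (R : comNzRingType) (V : lmodType R) (g : V -> R) : Prop :=
  forall a x y, g (a *: x + y) = a * g x + g y.

Section LinearFunctional.
Variables (R : comNzRingType) (V : lmodType R) (g : V -> R).
Hypothesis hg : lin_functional g.

Lemma lin0 : g 0 = 0.
Proof.
have h := hg 1 0 0; rewrite scaler0 addr0 mul1r in h.
by apply: (addrI (g 0)); rewrite -h addr0.
Qed.

Lemma linD x y : g (x + y) = g x + g y.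
Proof. by have := hg 1 x y; rewrite scale1r mul1r. Qed.

Lemma linZ a x : g (a *: x) = a * g x.
Proof. by have := hg a x 0; rewrite addr0 lin0 addr0. Qed.

End LinearFunctional.

Section QuadraticForm.
Variables (R : comNzRingType) (V : lmodType R) (Q : V -> R).
Hypothesis hQ : quad_form Q.

Lemma quadN x : Q (- x) = Q x.
Proof. by rewrite -scaleN1r hQ.1 sqrrN expr1n mul1r. Qed.

Lemma quadD x y : Q (x + y) = Q x + Q y + polar Q x y.
Proof. by rewrite /polar; ring. Qed.

Lemma polarC x y : polar Q x y = polar Q y x.
Proof. by rewrite /polar [y + x]addrC; ring. Qed.

Lemma polar_linear_l z : lin_functional (fun x => polar Q x z).
Proof. by move=> a x y; exact: hQ.2. Qed.

Lemma polar_linear_r z : lin_functional (polar Q z).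
Proof. by move=> a x y; rewrite !(polarC z) hQ.2. Qed.

Lemma polarDl x y z : polar Q (x + y) z = polar Q x z + polar Q y z.
Proof. exact: (linD (polar_linear_l z)). Qed.

Lemma polarZl a x z : polar Q (a *: x) z = a * polar Q x z.
Proof. exact: (linZ (polar_linear_l z)). Qed.

Lemma polarZr a x z : polar Q z (a *: x) = a * polar Q z x.
Proof. exact: (linZ (polar_linear_r z)). Qed.

Lemma polar0l z : polar Q 0 z = 0.
Proof. exact: (lin0 (polar_linear_l z)). Qed.

Lemma polarNr x z : polar Q z (- x) = - polar Q z x.
Proof. by rewrite -scaleN1r polarZr mulN1r. Qed.

Lemma polarxx x : polar Q x x = 2 * Q x.
Proof. by rewrite /polar -mulr2n -scaler_nat hQ.1; ring. Qed.

End QuadraticForm.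

Lemma nonunitM (R : comNzRingType) (a b : R) : ~ is_unit a -> ~ is_unit (a * b).
Proof. by move=> ha [y hy]; apply: ha; exists (b * y); rewrite mulrA. Qed.

(* Valuation domains: integral domains whose principal ideals are totally
   ordered by inclusion, such as Z_p. *)
Section ValuationDomain.
Variable R : comNzRingType.
Hypothesis mul_eq0 : forall a b : R, a * b = 0 -> a = 0 \/ b = 0.
Hypothesis dvd_total : forall a b : R, (exists c, b = a * c) \/ (exists c, a = b * c).

Lemma mulrI_nz (c a b : R) : c != 0 -> c * a = c * b -> a = b.
Proof.
move=> hc e; apply/eqP; rewrite -subr_eq0; apply/eqP.
have : c * (a - b) = 0 by rewrite mulrBr e subrr.
by case/mul_eq0 => // h; rewrite h eqxx in hc.
Qed.

Lemma nonunitD (a b : R) : ~ is_unit a -> ~ is_unit b -> ~ is_unit (a + b).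
Proof.
move=> ha hb; case: (dvd_total a b) => -[c ->].
  by rewrite -[X in X + _]mulr1 -mulrDr; exact: nonunitM.
by rewrite -[X in _ + X]mulr1 -mulrDr; exact: nonunitM.
Qed.

Lemma unit_1_plus_nonunit (a : R) : ~ is_unit a -> is_unit (1 + a).
Proof.
move=> ha; apply: NNPP => h1.
have hNa : ~ is_unit (- a) by rewrite -mulN1r mulrC; exact: nonunitM.
by apply: (nonunitD h1 hNa); exists 1; rewrite addrK mulr1.
Qed.

Lemma common_divisor (s : seq R) : has (fun x => x != 0) s ->
  exists c, [/\ c \in s, c != 0 & forall y, y \in s -> exists t, y = c * t].
Proof.
elim: s => [|a s IH] //= hs.
have a_dvd_all : a != 0 -> (forall y, y \in s -> exists t, y = a * t) ->
    exists c, [/\ c \in a :: s, c != 0 & forall y, y \in a :: s -> exists t, y = c * t].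
  move=> ha hdvd; exists a; split; rewrite ?inE ?eqxx //.
  by move=> y /predU1P [->|/hdvd //]; exists 1; rewrite mulr1.
have [hs'|hs'] := boolP (has (fun x => x != 0) s); last first.
  apply: a_dvd_all; first by move: hs; rewrite (negPf hs') orbF.
  move=> y hy; exists 0; rewrite mulr0; apply/eqP; apply: contraNT hs' => hy0.
  by apply/hasP; exists y.
have [b [hb hb0 hbd]] := IH hs'.
case: (dvd_total a b) => -[t et].
  have ha : a != 0 by apply: contraNneq hb0 => ha; rewrite et ha mul0r.
  apply: a_dvd_all => // y /hbd [t' ->].
  by exists (t * t'); rewrite et mulrA.
exists b; split; rewrite ?inE ?hb ?orbT //.
by move=> y /predU1P [->|/hbd //]; exists t.
Qed.

End ValuationDomain.

Section Coordinates.
Variable R : comNzRingType.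

Definition mk4 (a b c d : R) : 'rV[R]_4 := \row_(i < 4) nth 0 [:: a; b; c; d] i.
Definition mk2 (a b : R) : 'rV[R]_2 := \row_(i < 2) nth 0 [:: a; b] i.

Lemma row4_eq (u v : 'rV[R]_4) : u 0 o4_0 = v 0 o4_0 -> u 0 o4_1 = v 0 o4_1 ->
  u 0 o4_2 = v 0 o4_2 -> u 0 o4_3 = v 0 o4_3 -> u = v.
Proof.
move=> h0 h1 h2 h3; apply/rowP => -[[|[|[|[|i]]]] hi] //.
- by rewrite (_ : Ordinal hi = o4_0) //; apply: val_inj.
- by rewrite (_ : Ordinal hi = o4_1) //; apply: val_inj.
- by rewrite (_ : Ordinal hi = o4_2) //; apply: val_inj.
- by rewrite (_ : Ordinal hi = o4_3) //; apply: val_inj.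
Qed.

Lemma row2_eq (u v : 'rV[R]_2) : u 0 o2_0 = v 0 o2_0 -> u 0 o2_1 = v 0 o2_1 -> u = v.
Proof.
move=> h0 h1; apply/rowP => -[[|[|i]] hi] //.
- by rewrite (_ : Ordinal hi = o2_0) //; apply: val_inj.
- by rewrite (_ : Ordinal hi = o2_1) //; apply: val_inj.
Qed.

End Coordinates.

Section HyperbolicSplitting.
Variables (R : comNzRingType) (n : nat) (QL : 'rV[R]_n -> R).
Hypothesis hQL : quad_form QL.
Local Notation V := ('rV[R]_n * 'rV[R]_4)%type.

Lemma QLH2_polar (x y : V) : polar (QLH2 QL) x y = polar QL x.1 y.1
  + x.2 0 o4_0 * y.2 0 o4_1 + x.2 0 o4_1 * y.2 0 o4_0
  + x.2 0 o4_2 * y.2 0 o4_3 + x.2 0 o4_3 * y.2 0 o4_2.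
Proof. by rewrite /polar /QLH2 /= !mxE; ring. Qed.

Lemma QLH2_quad : quad_form (QLH2 QL).
Proof.
split; first by move=> a x; rewrite /QLH2 /= !mxE hQL.1; ring.
by move=> a x y z; rewrite !QLH2_polar /= !mxE hQL.2; ring.
Qed.

Definition eLv (v : 'rV[R]_n) : V := (v, 0).
Definition eH (k : 'I_4) : V := (0, \row_(j < 4) (j == k)%:R).

Lemma V_decomp (x : V) : x = eLv x.1 + x.2 0 o4_0 *: eH o4_0 + x.2 0 o4_1 *: eH o4_1
  + x.2 0 o4_2 *: eH o4_2 + x.2 0 o4_3 *: eH o4_3.
Proof.
case: x => a b; rewrite /eLv /eH; congr pair => /=; first by rewrite !scaler0 !addr0.
by apply: row4_eq; rewrite !mxE /=; ring.
Qed.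

Lemma functional_expand g : lin_functional g -> forall x, g x = g (eLv x.1)
  + x.2 0 o4_0 * g (eH o4_0) + x.2 0 o4_1 * g (eH o4_1)
  + x.2 0 o4_2 * g (eH o4_2) + x.2 0 o4_3 * g (eH o4_3).
Proof. by move=> hg x; rewrite {1}(V_decomp x) !(linD hg) !(linZ hg). Qed.

(* [hyp_split P]: the submodule cut out by P is the isometric image of
   H ⊥ Lambda for some lattice Lambda; this is the conclusion of the theorem. *)
Definition hyp_split (P : V -> Prop) : Prop :=
  exists (m : nat) (QLam : 'rV[R]_m -> R), quad_form QLam /\
    exists phi : 'rV[R]_2 * 'rV[R]_m -> V,
      [/\ (forall (a : R) y z, phi (a *: y + z) = a *: phi y + phi z),
          injective phi,
          (forall x, P x <-> exists y, phi y = x) &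
          (forall y, QLH2 QL (phi y) = QHL QLam y)].

Lemma hyp_split_iff (P P' : V -> Prop) :
  (forall x, P x <-> P' x) -> hyp_split P -> hyp_split P'.
Proof.
move=> e [m [Q [hQ [phi [h1 h2 h3 h4]]]]]; exists m, Q; split => //.
by exists phi; split => // x; rewrite -e.
Qed.

(* The kernel of a linear functional g with g (eH 0) = 1.  Solving g x = 0
   for the coordinate x_0 parametrises the kernel by L, x_1, x_2, x_3; the
   shifted coordinates y_0 = x_2 - a_3 x_1 and y_1 = x_3 - a_2 x_1 span a
   hyperbolic plane orthogonal to the remaining lattice L ⊕ R x_1. *)
Section KernelWithPivot.
Variable g : V -> R.
Hypothesis hg : lin_functional g.
Hypothesis g_e0 : g (eH o4_0) = 1.

Let ell (v : 'rV[R]_n) := g (eLv v).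
Let a1 := g (eH o4_1).
Let a2 := g (eH o4_2).
Let a3 := g (eH o4_3).

Lemma ellD v v' : ell (v + v') = ell v + ell v'.
Proof. by rewrite /ell -(linD hg); congr g; rewrite /eLv; congr pair; rewrite addr0. Qed.

Lemma ellZ a v : ell (a *: v) = a * ell v.
Proof. by rewrite /ell -(linZ hg); congr g; rewrite /eLv; congr pair; rewrite scaler0. Qed.

(* Lambda = L ⊕ R, written 'rV_(n + 1): the L-part and the scalar part. *)
Let sc (z : 'rV[R]_(n + 1)) : R := rsubmx z 0 0.

Lemma scD z z' : sc (z + z') = sc z + sc z'.
Proof. by rewrite /sc !mxE. Qed.
Lemma scZ a z : sc (a *: z) = a * sc z.
Proof. by rewrite /sc !mxE. Qed.

(* The form induced on Lambda by restricting Q to the kernel. *)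
Definition QLam (z : 'rV[R]_(n + 1)) : R :=
  QL (lsubmx z) - ell (lsubmx z) * sc z - (a1 + a2 * a3) * sc z ^+ 2.

(* The parametrisation H ⊥ Lambda -> ker g; y_0, y_1 are the coordinates on
   H and x_L, s those on Lambda. *)
Definition kerParam (y : 'rV[R]_2 * 'rV[R]_(n + 1)) : V :=
  let xL := lsubmx y.2 in let s := sc y.2 in
  let y0 := y.1 0 o2_0 in let y1 := y.1 0 o2_1 in
  (xL, mk4 (- (ell xL + a1 * s + 2 * a2 * a3 * s) - y0 * a2 - y1 * a3)
           s (a3 * s + y0) (a2 * s + y1)).

Lemma QLam_polar z z' : polar QLam z z' = polar QL (lsubmx z) (lsubmx z')
  - ell (lsubmx z) * sc z' - ell (lsubmx z') * sc z - 2 * (a1 + a2 * a3) * sc z * sc z'.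
Proof. by rewrite /polar /QLam scD linearD ellD; ring. Qed.

Lemma QLam_quad : quad_form QLam.
Proof.
split; first by move=> a z; rewrite /QLam scZ linearZ ellZ hQL.1; ring.
move=> a x y z; rewrite !QLam_polar scD scZ linearD linearZ hQL.2 ellD ellZ; ring.
Qed.

Lemma kerParam_linear a y z : kerParam (a *: y + z) = a *: kerParam y + kerParam z.
Proof.
case: y z => [y1 y2] [z1 z2]; rewrite /kerParam /= scD scZ linearD linearZ ellD ellZ.
by congr pair; apply: row4_eq; rewrite !mxE /=; ring.
Qed.

Lemma kerParam_inj : injective kerParam.
Proof.
move=> [y1 y2] [z1 z2] e.
have eL := f_equal fst e; have e1 := f_equal (fun v : V => v.2 0 o4_1) e.
have e2 := f_equal (fun v : V => v.2 0 o4_2) e; have e3 := f_equal (fun v : V => v.2 0 o4_3) e.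
rewrite /kerParam /= !mxE /= in eL e1 e2 e3.
rewrite e1 in e2 e3; move/addrI: e2 => e2; move/addrI: e3 => e3.
congr pair; first exact: row2_eq.
rewrite -(hsubmxK y2) -(hsubmxK z2) eL; congr row_mx.
by apply/matrixP => i j; rewrite !ord1.
Qed.

Lemma kerParam_image x : g x = 0 <-> exists y, kerParam y = x.
Proof.
rewrite (functional_expand hg) g_e0 -/a1 -/a2 -/a3 -/(ell x.1); split => [gx|[y <-]].
  exists (mk2 (x.2 0 o4_2 - a3 * x.2 0 o4_1) (x.2 0 o4_3 - a2 * x.2 0 o4_1),
          row_mx x.1 (const_mx (x.2 0 o4_1))).
  rewrite /kerParam /sc /= row_mxKl row_mxKr !mxE /=.
  case: x gx => [xL xH] /= gx; congr pair.
  apply: row4_eq; rewrite !mxE /=; try ring.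
  by rewrite -[RHS]subr0 -gx; ring.
by rewrite /kerParam /= !mxE /=; ring.
Qed.

Lemma kerParam_isometry y : QLH2 QL (kerParam y) = QHL QLam y.
Proof. by rewrite /QLH2 /QHL /kerParam /QLam /= !mxE /=; ring. Qed.

Lemma kernel_split_pivot : hyp_split (fun x => g x = 0).
Proof.
exists (n + 1)%N, QLam; split; first exact: QLam_quad.
exists kerParam; split.
- exact: kerParam_linear.
- exact: kerParam_inj.
- exact: kerParam_image.
- exact: kerParam_isometry.
Qed.

End KernelWithPivot.

Definition isometry (sig tau : V -> V) : Prop :=
  [/\ forall a x y, sig (a *: x + y) = a *: sig x + sig y,
      cancel sig tau, cancel tau sig &
      forall x, QLH2 QL (sig x) = QLH2 QL x].

Lemma hyp_split_isometry sig tau (P : V -> Prop) :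
  isometry sig tau -> hyp_split (fun x => P (sig x)) -> hyp_split P.
Proof.
move=> [sigL sigK tauK sigQ] [m [Q [hQ [phi [h1 h2 h3 h4]]]]].
exists m, Q; split => //; exists (fun y => sig (phi y)); split.
- by move=> a y z; rewrite h1 sigL.
- by move=> y z /(can_inj sigK); exact: h2.
- move=> x; rewrite -{1}(tauK x) h3; split => -[y e]; exists y.
    by rewrite e tauK.
  by rewrite -e sigK.
- by move=> y; rewrite sigQ h4.
Qed.

(* The kernel of g splits off a hyperbolic plane as soon as g takes a unit
   value on the image of eH 0 under some isometry: normalise the value to 1
   and transport the splitting of Section KernelWithPivot. *)
Lemma kernel_split_unit sig tau g : isometry sig tau -> lin_functional g ->
  is_unit (g (sig (eH o4_0))) -> hyp_split (fun x => g x = 0).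
Proof.
move=> hsig hg [u hu].
apply: (@hyp_split_iff (fun x => u * g x = 0)).
  move=> x; split => [e|->]; last by rewrite mulr0.
  by rewrite -[g x]mul1r -hu -mulrA e mulr0.
apply: (hyp_split_isometry hsig); apply: kernel_split_pivot; last by rewrite mulrC.
by move=> a x y; case: hsig => sigL _ _ _; rewrite sigL (linD hg) (linZ hg); ring.
Qed.

(* Coordinate permutations of H^2 preserving x_0 x_1 + x_2 x_3 move eH 0
   to any hyperbolic basis vector. *)
Lemma hyperbolic_swap (k : 'I_4) :
  exists sig tau, isometry sig tau /\ sig (eH o4_0) = eH k.
Proof.
pose perm (s : 'I_4 -> 'I_4) (x : V) : V := (x.1, \row_j x.2 0 (s j)).
have perm_swap s : involutive s -> (forall x, QLH2 QL (perm s x) = QLH2 QL x) ->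
    s o4_0 = k -> exists sig tau, isometry sig tau /\ sig (eH o4_0) = eH k.
  move=> sK sQ s0; exists (perm s), (perm s); split; last first.
    rewrite /perm /eH; congr pair => //; apply/rowP => j; rewrite !mxE.
    by rewrite -s0 (can2_eq sK sK).
  have permK : involutive (perm s).
    by case=> xL xH; rewrite /perm; congr pair => //; apply/rowP => j; rewrite !mxE sK.
  split => // a x y.
  by rewrite /perm; congr pair => //; apply/rowP => j; rewrite !mxE.
pose s_of (l : seq 'I_4) (j : 'I_4) := nth o4_0 l j.
have s_inv l : (forall j : 'I_4, val (s_of l (s_of l j)) = val j) -> involutive (s_of l).
  by move=> h j; apply: val_inj.
move: perm_swap; case: k => [[|[|[|[|i]]]] hk] // perm_swap.
- apply: (perm_swap (s_of [:: o4_0; o4_1; o4_2; o4_3])).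
  + by apply: s_inv => -[[|[|[|[|i]]]] hi].
  + by move=> x; rewrite /QLH2 /perm /= !mxE.
  + exact: val_inj.
- apply: (perm_swap (s_of [:: o4_1; o4_0; o4_2; o4_3])).
  + by apply: s_inv => -[[|[|[|[|i]]]] hi].
  + by move=> x; rewrite /QLH2 /perm /= !mxE; ring.
  + exact: val_inj.
- apply: (perm_swap (s_of [:: o4_2; o4_3; o4_0; o4_1])).
  + by apply: s_inv => -[[|[|[|[|i]]]] hi].
  + by move=> x; rewrite /QLH2 /perm /= !mxE; ring.
  + exact: val_inj.
- apply: (perm_swap (s_of [:: o4_3; o4_2; o4_1; o4_0])).
  + by apply: s_inv => -[[|[|[|[|i]]]] hi].
  + by move=> x; rewrite /QLH2 /perm /= !mxE; ring.
  + exact: val_inj.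
Qed.

(* The Eichler transformation x |-> x + x_0 v - (<x_L, v> + Q_L(v) x_0) e_1
   for v in L: an isometry of Lambda_0 whose inverse is the one for -v. *)
Definition eichler (v : 'rV[R]_n) (x : V) : V :=
  (x.1 + x.2 0 o4_0 *: v,
   mk4 (x.2 0 o4_0) (x.2 0 o4_1 - polar QL x.1 v - QL v * x.2 0 o4_0)
       (x.2 0 o4_2) (x.2 0 o4_3)).

Lemma eichlerK v : cancel (eichler v) (eichler (- v)).
Proof.
case=> xL xH; rewrite /eichler /=; congr pair.
  by apply/rowP => i; rewrite !mxE /= mulrN addrK.
apply: row4_eq; rewrite !mxE //=.
by rewrite (polarNr hQL) (polarDl hQL) (polarZl hQL) (polarxx hQL) (quadN hQL); ring.
Qed.

Lemma eichler_isometry v : isometry (eichler v) (eichler (- v)).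
Proof.
split.
- move=> a [x1 x2] [y1 y2]; rewrite /eichler /=; congr pair.
    by apply/rowP => i; rewrite !mxE; ring.
  by apply: row4_eq; rewrite !mxE /= ?hQL.2; ring.
- exact: eichlerK.
- by move=> x; have := eichlerK (- v) x; rewrite opprK.
- by case=> xL xH; rewrite /eichler /QLH2 /= !mxE /= (quadD QL) hQL.1 (polarZr hQL); ring.
Qed.

Lemma eichler_e0 g v : lin_functional g ->
  g (eichler v (eH o4_0)) = g (eLv v) + g (eH o4_0) - QL v * g (eH o4_1).
Proof.
move=> hg; rewrite (functional_expand hg) /eichler /eH /= !mxE /=.
by rewrite add0r scale1r (polar0l hQL); ring.
Qed.

Definition basis_vec (t : 'I_n + 'I_4) : V :=
  match t with inl i => eLv 'e_i | inr k => eH k end.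

Lemma functional_dvd g c : lin_functional g ->
  (forall t, exists s, g (basis_vec t) = c * s) -> forall x, exists s, g x = c * s.
Proof.
move=> hg hdvd x; rewrite (functional_expand hg).
have dvdL : exists s, g (eLv x.1) = c * s.
  rewrite [x.1]row_sum_delta.
  apply: (big_ind (fun v => exists s, g (eLv v) = c * s)).
  - by exists 0; rewrite mulr0 -(lin0 hg).
  - move=> u v [s1 e1] [s2 e2]; exists (s1 + s2).
    have -> : eLv (u + v) = eLv u + eLv v by rewrite /eLv; congr pair; rewrite addr0.
    by rewrite (linD hg) e1 e2 mulrDr.
  - move=> i _; have [s e] := hdvd (inl i); exists (x.1 0 i * s).
    have -> : eLv (x.1 0 i *: 'e_i) = x.1 0 i *: eLv 'e_i.
      by rewrite /eLv; congr pair; rewrite scaler0.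
    by rewrite (linZ hg) /= e; ring.
have [s0 e0] := dvdL; have [s1 e1] := hdvd (inr o4_0); have [s2 e2] := hdvd (inr o4_1).
have [s3 e3] := hdvd (inr o4_2); have [s4 e4] := hdvd (inr o4_3).
exists (s0 + x.2 0 o4_0 * s1 + x.2 0 o4_1 * s2 + x.2 0 o4_2 * s3 + x.2 0 o4_3 * s4).
by rewrite e0 /= in e1 e2 e3 e4 *; rewrite e1 e2 e3 e4; ring.
Qed.

Section OverValuationDomain.
Hypothesis mul_eq0 : forall a b : R, a * b = 0 -> a = 0 \/ b = 0.
Hypothesis dvd_total : forall a b : R, (exists c, b = a * c) \/ (exists c, a = b * c).

(* For a hyperbolic basis vector, swap it to eH 0; for a
   basis vector v of L, one of g(e_0), g(e_1), g(eichler v e_0) is a unit. *)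
Lemma kernel_split_primitive g t : lin_functional g -> g (basis_vec t) = 1 ->
  hyp_split (fun x => g x = 0).
Proof.
move=> hg; have unit1 : is_unit (1 : R) by exists 1; rewrite mulr1.
case: t => [i|k] /= g_t.
  case: (classic (is_unit (g (eH o4_0)))) => [u0|nu0].
    by apply: (@kernel_split_unit id id) => //; split.
  case: (classic (is_unit (g (eH o4_1)))) => [u1|nu1].
    have [sig [tau [hsig sig_e0]]] := hyperbolic_swap o4_1.
    by apply: (kernel_split_unit hsig); rewrite ?sig_e0.
  apply: (kernel_split_unit (eichler_isometry 'e_i)) => //.
  rewrite (eichler_e0 _ hg) g_t -addrA; apply: unit_1_plus_nonunit => //.
  apply: nonunitD => //; rewrite -mulNr mulrC; exact: nonunitM.
have [sig [tau [hsig sig_e0]]] := hyperbolic_swap k.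
by apply: (kernel_split_unit hsig); rewrite ?sig_e0 ?g_t.
Qed.

Lemma primitive_factor f x0 : lin_functional f -> f x0 != 0 ->
  exists c g t, [/\ c != 0, lin_functional g, forall x, f x = c * g x & g (basis_vec t) = 1].
Proof.
move=> hf fx0.
pose vals := codom (fun t => f (basis_vec t)).
have [hs|hs] := boolP (has (fun x => x != 0) vals); last first.
  have [s es] : exists s, f x0 = 0 * s.
    apply: (functional_dvd hf) => t; exists 0; rewrite mul0r.
    by apply/eqP/negPn; apply: (hasPn hs); exact: codom_f.
  by rewrite es mul0r eqxx in fx0.
have [c [hc c0 cdvd]] := common_divisor dvd_total hs.
have [t0 et0] := codomP hc.
have hquot : forall x, exists s, f x = c * s.
  by apply: (functional_dvd hf) => t; apply: cdvd; exact: codom_f.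
pose g x := proj1_sig (constructive_indefinite_description _ (hquot x)).
have fg x : f x = c * g x by rewrite /g; case: constructive_indefinite_description.
exists c, g, t0; split => //.
  by move=> a x y; apply: (mulrI_nz mul_eq0 c0); rewrite -fg hf !fg; ring.
by apply: (mulrI_nz mul_eq0 c0); rewrite -fg -et0 mulr1.
Qed.

Theorem orthogonal_complement_split (two_neq0 : (2 : R) != 0) w :
  QLH2 QL w != 0 -> hyp_split (fun x => polar (QLH2 QL) w x = 0).
Proof.
move=> hw; have hf := polar_linear_r QLH2_quad w.
have fw : polar (QLH2 QL) w w != 0.
  by rewrite (polarxx QLH2_quad); apply/eqP => /mul_eq0 [] /eqP; apply/negP.
have [c [g [t [c0 hg fg g_t]]]] := primitive_factor hf fw.
apply: (@hyp_split_iff (fun x => g x = 0)); last exact: kernel_split_primitive g_t.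
move=> x; rewrite fg; split => [->|]; first by rewrite mulr0.
by case/mul_eq0 => // c_eq0; rewrite c_eq0 eqxx in c0.
Qed.

End OverValuationDomain.

End HyperbolicSplitting.

(* Z_p is a valuation domain: every nonzero x is p^k u with u a unit, which
   gives both the absence of zero divisors and the total divisibility order. *)
Section PadicIntegers.
Variable p : nat.
Hypothesis p_prime : prime p.
Local Notation Zp := (padint p).

Lemma padMS n : padM p n.+1 = (p * padM p n)%N.
Proof. by rewrite /padM /padq expnS (maxn_idPl (prime_gt1 p_prime)). Qed.

Lemma padM0 : padM p 0 = p.
Proof. by rewrite /padM /padq expn1 (maxn_idPl (prime_gt1 p_prime)). Qed.

Lemma val_padL_nat n k : val (k%:R : padL p n) = (k %% padM p n)%N.
Proof. exact: val_Zp_nat (padM_gt1 p n) k. Qed.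

Lemma zseq_nat (k n : nat) : zseq (k%:R : Zp) n = k%:R.
Proof. by elim: k => [|k IH] //; rewrite -addn1 !natrD -IH. Qed.

Lemma zval_coh (x : Zp) n : val (zseq x n) = (val (zseq x n.+1) %% padM p n)%N.
Proof. by rewrite -(zcoh x n) /padred val_padL_nat. Qed.

Lemma zval0 (x : Zp) n : val (zseq x 0) = (val (zseq x n) %% p)%N.
Proof.
have -> : (val (zseq x n) %% p = val (zseq x n) %% padM p 0)%N by rewrite padM0.
elim: n => [|n IH].
  by rewrite -val_padL_nat natr_Zp.
by rewrite IH zval_coh modn_dvdm // /padM dvdn_exp2l.
Qed.

(* An element with nonzero residue is a unit: invert every approximation. *)
Lemma unit_of_residue (x : Zp) : zseq x 0 != 0 -> is_unit x.
Proof.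
move=> h.
have xn_unit n : zseq x n \is a GRing.unit.
  have coprime_padM (v : nat) : (v %% p != 0)%N -> coprime (padM p n) v.
    move=> hv; rewrite /padM /padq (maxn_idPl (prime_gt1 p_prime)).
    by rewrite coprime_pexpl // prime_coprime.
  rewrite -[zseq x n]natr_Zp unitZpE ?padM_gt1 //; apply: coprime_padM.
  rewrite -zval0; apply: contra h => /eqP h; apply/eqP/val_inj.
  by rewrite /= h.
have coh n : padred ((zseq x n.+1)^-1) = (zseq x n)^-1.
  apply/esym/mulr1_eq.
  by rewrite -(zcoh x n) -padredM mulrV ?padred1 ?xn_unit.
exists (@MkZp p (fun n => (zseq x n)^-1) coh).
by apply: Zp_ext => n /=; rewrite mulrV ?xn_unit.
Qed.

(* An element with zero residue is divisible by p: divide every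
   approximation by p, shifting the index by one. *)
Lemma dvd_p_of_residue (x : Zp) : zseq x 0 = 0 -> exists y, x = p%:R * y.
Proof.
move=> h0.
have dv n : (p %| val (zseq x n))%N by rewrite /dvdn -zval0 h0.
pose ys n := ((val (zseq x n.+1)) %/ p)%:R : padL p n.
have coh n : padred (ys n.+1) = ys n.
  apply: val_inj; rewrite /padred /ys !val_padL_nat (zval_coh x n.+1).
  have /dvdnP [a ->] := dv n.+2.
  rewrite padMS mulnC -muln_modr !mulKn ?prime_gt0 //.
  by rewrite modn_mod modn_dvdm // dvdn_mull.
exists (@MkZp p ys coh); apply: Zp_ext => n /=.
by rewrite zseq_nat /ys -natrM mulnC divnK // -(zcoh x n).
Qed.

Lemma zseq_div_p (x y : Zp) N : x = p%:R * y -> zseq x N.+1 != 0 -> zseq y N != 0.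
Proof.
move=> -> ; apply: contraNneq => hy /=.
apply/eqP; rewrite zseq_nat -[zseq y N.+1]natr_Zp -natrM; apply: val_inj.
have h : (val (zseq y N.+1) %% padM p N = 0)%N by rewrite -zval_coh hy.
have mulp_mod (v : nat) : (v %% padM p N = 0 -> (p * v) %% padM p N.+1 = 0)%N.
  by move=> hv; rewrite padMS -muln_modr hv muln0.
by rewrite /= val_padL_nat; apply: mulp_mod.
Qed.

Lemma padic_factor (x : Zp) : x != 0 -> exists k u, is_unit u /\ x = p%:R ^+ k * u.
Proof.
move=> hx.
have [N hN] : exists N, zseq x N != 0.
  apply: NNPP => hall; move/eqP: hx; apply; apply: Zp_ext => N.
  by apply/eqP/negPn/negP => hN; apply: hall; exists N.
elim: N x hx hN => [|N IH] x hx hN.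
  by exists 0%N, x; split; [exact: unit_of_residue|rewrite expr0 mul1r].
have [h0|h0] := eqVneq (zseq x 0) 0; last first.
  by exists 0%N, x; split; [exact: unit_of_residue|rewrite expr0 mul1r].
have [y hy] := dvd_p_of_residue h0.
have hyN := zseq_div_p hy hN.
have [|k [u [hu e]]] := IH y _ hyN; first by apply: contraNneq hyN => ->.
by exists k.+1, u; split => //; rewrite hy e exprS mulrA.
Qed.

Lemma p_power_neq0 N : (p%:R ^+ N : Zp) != 0.
Proof.
apply/negP => /eqP /(f_equal (fun z => val (zseq z N))).
rewrite -natrX zseq_nat val_padL_nat /= modn_small; last first.
  by rewrite /padM /padq (maxn_idPl (prime_gt1 p_prime)) ltn_exp2l // prime_gt1.
by move/eqP; rewrite expn_eq0 (gtn_eqF (prime_gt0 p_prime)).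
Qed.

Lemma Zp_mul_eq0 (a b : Zp) : a * b = 0 -> a = 0 \/ b = 0.
Proof.
move=> hab; have [->|ha] := eqVneq a 0; first by left.
have [->|hb] := eqVneq b 0; first by right.
have [k [u [[u' hu] ea]]] := padic_factor ha.
have [l [v [[v' hv] eb]]] := padic_factor hb.
have := p_power_neq0 (k + l); rewrite exprD.
have -> : p%:R ^+ k * p%:R ^+ l = a * b * (u' * v') :> Zp.
  rewrite ea eb; transitivity (p%:R ^+ k * p%:R ^+ l * (u * u') * (v * v') : Zp).
    by rewrite hu hv !mulr1.
  by ring.
by rewrite hab mul0r eqxx.
Qed.

Lemma Zp_dvd_total (a b : Zp) : (exists c, b = a * c) \/ (exists c, a = b * c).
Proof.
have [->|ha] := eqVneq a 0; first by right; exists 0; rewrite mulr0.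
have [->|hb] := eqVneq b 0; first by left; exists 0; rewrite mulr0.
have [k [u [[u' hu] ea]]] := padic_factor ha.
have [l [v [[v' hv] eb]]] := padic_factor hb.
(* p^k u divides p^l v when k <= l, with quotient u^-1 p^(l-k) v *)
have dvd_pow (k' l' : nat) (u0 u0' v0 : Zp) : (k' <= l')%N -> u0 * u0' = 1 ->
    p%:R ^+ l' * v0 = p%:R ^+ k' * u0 * (u0' * p%:R ^+ (l' - k') * v0).
  move=> hkl hu0; rewrite -{1}(subnKC hkl) exprD.
  by transitivity (p%:R ^+ k' * p%:R ^+ (l' - k') * v0 * (u0 * u0')); [rewrite hu0 mulr1|ring].
case: (leqP k l) => hkl; first by left; exists (u' * p%:R ^+ (l - k) * v); rewrite ea eb (dvd_pow k l u u').
by right; exists (v' * p%:R ^+ (k - l) * u); rewrite ea eb (dvd_pow l k v v') // ltnW.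
Qed.

Lemma Zp_two_neq0 : (2 : Zp) != 0.
Proof.
apply/negP => /eqP /(f_equal (fun z => val (zseq z 1))).
rewrite zseq_nat val_padL_nat /= modn_small // /padM /padq.
rewrite (maxn_idPl (prime_gt1 p_prime)).
by apply: (@leq_trans (2 ^ 2)); [|rewrite leq_exp2r // prime_gt1].
Qed.

End PadicIntegers.

Theorem mainTheorem12 (p : nat) (p_prime : prime p)
    (n : nat) (QL : 'rV[padint p]_n -> padint p) (hQL : quad_form QL)
    (w : 'rV[padint p]_n * 'rV[padint p]_4) (hw : QLH2 QL w != 0) :
  exists (m : nat) (QLam : 'rV[padint p]_m -> padint p),
    quad_form QLam /\
    exists phi : 'rV[padint p]_2 * 'rV[padint p]_m -> 'rV[padint p]_n * 'rV[padint p]_4,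
      [/\ (forall (a : padint p) y z, phi (a *: y + z) = a *: phi y + phi z),
          injective phi,
          (forall x, polar (QLH2 QL) w x = 0 <-> exists y, phi y = x) &
          (forall y, QLH2 QL (phi y) = QHL QLam y)].
Proof.
exact: (orthogonal_complement_split hQL (@Zp_mul_eq0 _ p_prime)
          (@Zp_dvd_total _ p_prime) (Zp_two_neq0 p_prime) hw).
Qed.
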